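(* Let $R>1$, $\Omega=[-R,-1]\cup[1,R]\subset\mathbb{R}$, $h>0$, and for $x\in\mathbb{R}$ let $A_\Omega^{(h)}(x)=\int_\Omega\frac{h}{(y-x)^2+h^2}\,dy$. Then: (1) if $0<h<\sqrt{R+(R+1)\sqrt{R}}$, the maximizers of $A_\Omega^{(h)}$ over $\mathbb{R}$ are exactly the two points $$x_\pm=\pm\sqrt{\sqrt{R\left((R+1)^2+4h^2\right)}-(R+h^2)};$$ (2) if $h\ge\sqrt{R+(R+1)\sqrt{R}}$, then $x=0$ is the unique maximizer of $A_\Omega^{(h)}$ over $\mathbb{R}$. *)

From Stdlib Require Import Reals ClassicalEpsilon.
Open Scope R_scope.

(* Riemann integral of f over [a,b] as a total function: RiemannInt of
   (any) integrability witness when f is Riemann integrable on [a,b],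
   and 0 otherwise. RiemannInt does not depend on the witness
   (RiemannInt_P5). *)
Definition Rint (f : R -> R) (a b : R) : R :=
  match excluded_middle_informative (inhabited (Riemann_integrable f a b)) with
  | left H => RiemannInt (epsilon H (fun _ => True))
  | right _ => 0
  end.

Definition A_Omega (Rr h x : R) : R :=
  Rint (fun y => h / ((y - x) ^ 2 + h ^ 2)) (- Rr) (-1)
  + Rint (fun y => h / ((y - x) ^ 2 + h ^ 2)) 1 Rr.

Definition is_maximizer (f : R -> R) (x : R) : Prop :=
  forall y : R, f y <= f x.

From Stdlib Require Import Reals Lra Psatz ClassicalEpsilon FunctionalExtensionality.
Open Scope R_scope.

(* Integrating the Poisson kernel, [A_Omega Rr h] is an even sum of four
   arctangents. Over a common denominator its derivative is
   [K x * x * (s - x^2)] with [K x > 0] and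
   [s = sqrt (Rr * ((Rr + 1)^2 + 4 h^2)) - (Rr + h^2)], so on [0, +oo) it increases
   up to [sqrt s] and decreases afterwards when [s > 0], and decreases throughout
   when [s <= 0]; finally [s > 0] exactly when [h^2 < Rr + (Rr + 1) sqrt Rr]. *)

Lemma Rint_antiderivative (f G : R -> R) (a b : R) :
  a <= b -> continuity f -> (forall y, derivable_pt_lim G y (f y)) ->
  Rint f a b = G b - G a.
Proof.
  intros hab f_cont G_deriv.
  set (dG := fun y => exist _ (f y) (G_deriv y) : derivable_pt G y).
  assert (dG_f : derive G dG = f) by reflexivity.
  assert (dG_cont : continuity (derive G dG)) by (rewrite dG_f; exact f_cont).
  pose proof (@FTC_Riemann (mkC1 dG_cont) a b) as FTC; simpl in FTC.
  rewrite dG_f in FTC.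
  unfold Rint; destruct excluded_middle_informative as [Hi | Hn].
  - apply FTC.
  - exfalso; apply Hn; constructor.
    apply continuity_implies_RiemannInt; auto.
Qed.

Lemma is_maximizer_iff_strict (f : R -> R) (m : R) (P : R -> Prop) :
  P m -> (forall y, P y -> f y = f m) -> (forall y, ~ P y -> f y < f m) ->
  forall x, is_maximizer f x <-> P x.
Proof.
  intros Pm f_P f_notP x; split.
  - intros x_max; destruct (classic (P x)) as [Px | nPx]; [exact Px|].
    specialize (x_max m); specialize (f_notP x nPx); lra.
  - intros Px y; rewrite (f_P x Px).
    destruct (classic (P y)) as [Py | nPy].
    + rewrite (f_P y Py); lra.
    + left; apply f_notP, nPy.
Qed.

Section EvenProfile.

Variables (f df : R -> R) (s : R).
Hypothesis f_even : forall x, f (- x) = f x.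
Hypothesis f_deriv : forall x, derivable_pt_lim f x (df x).
Hypothesis df_pos : forall x, 0 < x -> x ^ 2 < s -> 0 < df x.
Hypothesis df_neg : forall x, 0 < x -> s < x ^ 2 -> df x < 0.

Lemma lt_of_deriv_pos (a b : R) : a < b -> (forall c, a < c < b -> 0 < df c) -> f a < f b.
Proof.
  intros hab df_ab.
  destruct (MVT_cor2 f df a b hab (fun c _ => f_deriv c)) as [c [mvt hc]].
  pose proof (df_ab c hc); nra.
Qed.

Lemma lt_of_deriv_neg (a b : R) : a < b -> (forall c, a < c < b -> df c < 0) -> f b < f a.
Proof.
  intros hab df_ab.
  destruct (MVT_cor2 f df a b hab (fun c _ => f_deriv c)) as [c [mvt hc]].
  pose proof (df_ab c hc); nra.
Qed.

Lemma lt_at_sqrt (y : R) : 0 < s -> 0 <= y -> y <> sqrt s -> f y < f (sqrt s).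
Proof.
  intros s_pos y_ge0 y_ne.
  assert (sq : sqrt s * sqrt s = s) by (apply sqrt_sqrt; lra).
  pose proof (sqrt_lt_R0 s s_pos).
  destruct (Rlt_or_le y (sqrt s)) as [y_lt | y_ge].
  - apply lt_of_deriv_pos; [exact y_lt|]; intros c hc; apply df_pos; nra.
  - apply lt_of_deriv_neg; [lra|]; intros c hc; apply df_neg; nra.
Qed.

Lemma lt_at_0 (y : R) : s <= 0 -> y <> 0 -> f y < f 0.
Proof.
  intros s_le0 y_ne.
  assert (pos : forall z, 0 < z -> f z < f 0).
  { intros z hz; apply lt_of_deriv_neg; [exact hz|]; intros c hc; apply df_neg; nra. }
  destruct (Rlt_or_le 0 y) as [y_pos | y_le0]; [exact (pos y y_pos)|].
  rewrite <- f_even; apply pos; lra.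
Qed.

Lemma is_maximizer_sqrt_iff : 0 < s ->
  forall x, is_maximizer f x <-> x = sqrt s \/ x = - sqrt s.
Proof.
  intros s_pos; apply (is_maximizer_iff_strict f (sqrt s)); [now left| |].
  - intros y [-> | ->]; [reflexivity | apply f_even].
  - intros y y_ne; destruct (Rle_or_lt 0 y) as [y_ge0 | y_neg].
    + apply lt_at_sqrt; [exact s_pos | exact y_ge0 | tauto].
    + rewrite <- f_even; apply lt_at_sqrt; [exact s_pos | lra |].
      intros E; apply y_ne; right; lra.
Qed.

Lemma is_maximizer_0_iff : s <= 0 -> forall x, is_maximizer f x <-> x = 0.
Proof.
  intros s_le0; apply (is_maximizer_iff_strict f 0); [reflexivity | now intros y -> |].
  intros y; apply lt_at_0, s_le0.
Qed.

End EvenProfile.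

Definition poisson (h c x : R) : R := h / ((x - c) ^ 2 + h ^ 2).
Definition atan_shift (h c x : R) : R := atan ((x - c) / h).

Lemma poisson_den_pos (h c x : R) : 0 < h -> 0 < (x - c) ^ 2 + h ^ 2.
Proof. intros hh; pose proof (pow2_ge_0 (x - c)); pose proof (pow_lt h 2 hh); lra. Qed.

Lemma continuity_poisson (h c : R) : 0 < h -> continuity (poisson h c).
Proof.
  intros hh x; unfold poisson; reg.
  apply Rgt_not_eq, poisson_den_pos, hh.
Qed.

Lemma derivable_pt_lim_atan_shift (h c x : R) : 0 < h -> derivable_pt_lim (atan_shift h c) x (poisson h c x).
Proof.
  intros hh.
  assert (lin : derivable_pt_lim (fun y => (y - c) / h) x (/ h)).
  { replace (/ h) with ((1 - 0) / h) by (field; lra).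
    apply (derivable_pt_lim_div_scal (id - fct_cte c)%F).
    apply derivable_pt_lim_minus; [apply derivable_pt_lim_id | apply derivable_pt_lim_const]. }
  pose proof (derivable_pt_lim_comp _ atan _ _ _ lin (derivable_pt_lim_atan ((x - c) / h))) as D.
  replace (poisson h c x) with (/ (1 + ((x - c) / h) ^ 2) * / h); [exact D|].
  unfold poisson; pose proof (poisson_den_pos h c x hh); field; split; lra.
Qed.

Lemma atan_shift_swap (h c x : R) : 0 < h -> atan_shift h c x = - atan_shift h x c.
Proof.
  intros hh; unfold atan_shift; rewrite <- atan_opp; f_equal; field; lra.
Qed.

Lemma atan_shift_opp (h c x : R) : 0 < h -> atan_shift h c (- x) = - atan_shift h (- c) x.
Proof.
  intros hh; unfold atan_shift; rewrite <- atan_opp; f_equal; field; lra.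
Qed.

Definition A_closed (Rr h x : R) : R :=
  atan_shift h (- Rr) x - atan_shift h (-1) x + atan_shift h 1 x - atan_shift h Rr x.

Lemma A_Omega_closed (Rr h x : R) : 1 < Rr -> 0 < h -> A_Omega Rr h x = A_closed Rr h x.
Proof.
  intros hR hh; unfold A_Omega, A_closed.
  change (fun y => h / ((y - x) ^ 2 + h ^ 2)) with (poisson h x).
  assert (Int : forall a b, a <= b -> Rint (poisson h x) a b = atan_shift h x b - atan_shift h x a).
  { intros a b hab; apply Rint_antiderivative; auto using continuity_poisson.
    intro y; apply derivable_pt_lim_atan_shift, hh. }
  rewrite !Int by lra; rewrite !(atan_shift_swap h x) by exact hh; ring.
Qed.

Lemma A_closed_even (Rr h : R) : 0 < h -> forall x, A_closed Rr h (- x) = A_closed Rr h x.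
Proof.
  intros hh x; unfold A_closed; rewrite !atan_shift_opp by exact hh.
  replace (- (-1)) with 1 by ring; replace (- (1)) with (-1) by ring.
  rewrite Ropp_involutive; ring.
Qed.

Definition dA_closed (Rr h x : R) : R :=
  poisson h (- Rr) x - poisson h (-1) x + poisson h 1 x - poisson h Rr x.

Lemma derivable_pt_lim_A_closed (Rr h : R) :
  0 < h -> forall x, derivable_pt_lim (A_closed Rr h) x (dA_closed Rr h x).
Proof.
  intros hh x.
  change (derivable_pt_lim
    (atan_shift h (- Rr) - atan_shift h (-1) + atan_shift h 1 - atan_shift h Rr)%F x (dA_closed Rr h x)).
  repeat (apply derivable_pt_lim_minus || apply derivable_pt_lim_plus);
    apply derivable_pt_lim_atan_shift, hh.
Qed.

Definition crit_sq (Rr h : R) : R := sqrt (Rr * ((Rr + 1) ^ 2 + 4 * h ^ 2)) - (Rr + h ^ 2).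

(* Over the common denominator [P] the numerator is a quadratic [Q] in [x^2],
   and [Q = S^2 - (Rr + h^2 + x^2)^2] factors through [crit_sq Rr h - x^2]. *)
Lemma dA_closed_factor (Rr h x : R) : 1 < Rr -> 0 < h ->
  exists K, 0 < K /\ dA_closed Rr h x = K * x * (crit_sq Rr h - x ^ 2).
Proof.
  intros hR hh.
  set (S := sqrt (Rr * ((Rr + 1) ^ 2 + 4 * h ^ 2))).
  assert (S_sq : S * S = Rr * ((Rr + 1) ^ 2 + 4 * h ^ 2)).
  { apply sqrt_sqrt; pose proof (pow2_ge_0 (Rr + 1)); pose proof (pow2_ge_0 h); nra. }
  assert (S_ge0 : 0 <= S) by apply sqrt_pos.
  pose proof (poisson_den_pos h (-1) x hh); pose proof (poisson_den_pos h (- Rr) x hh).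
  pose proof (poisson_den_pos h Rr x hh); pose proof (poisson_den_pos h 1 x hh).
  pose proof (pow2_ge_0 x); pose proof (pow_lt h 2 hh).
  set (P := ((x + 1) ^ 2 + h ^ 2) * ((x + Rr) ^ 2 + h ^ 2)
            * ((x - Rr) ^ 2 + h ^ 2) * ((x - 1) ^ 2 + h ^ 2)).
  assert (P_pos : 0 < P).
  { unfold P; replace (x + 1) with (x - -1) by ring; replace (x + Rr) with (x - - Rr) by ring.
    repeat apply Rmult_lt_0_compat; lra. }
  exists (4 * h * (Rr - 1) * (x ^ 2 + S + Rr + h ^ 2) / P); split.
  - apply Rdiv_lt_0_compat; [repeat apply Rmult_lt_0_compat|]; lra.
  - set (u := x ^ 2).
    set (Q := - u * u - 2 * u * (h ^ 2 + Rr) + (Rr ^ 3 + Rr * Rr + Rr + 2 * Rr * h ^ 2 - h ^ 4)).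
    assert (Q_factor : Q = (crit_sq Rr h - u) * (u + S + Rr + h ^ 2)).
    { unfold crit_sq; fold S.
      transitivity (S * S - (Rr + h ^ 2 + u) ^ 2); [rewrite S_sq; unfold Q; ring | ring]. }
    transitivity (4 * h * (Rr - 1) * x * Q / P).
    + unfold dA_closed, poisson, Q, u, P.
      replace (x - -1) with (x + 1) by ring; replace (x - - Rr) with (x + Rr) by ring.
      field; repeat split; lra.
    + rewrite Q_factor; unfold u; field; lra.
Qed.

Lemma dA_closed_pos (Rr h : R) : 1 < Rr -> 0 < h ->
  forall x, 0 < x -> x ^ 2 < crit_sq Rr h -> 0 < dA_closed Rr h x.
Proof.
  intros hR hh x hx hlt; destruct (dA_closed_factor Rr h x hR hh) as [K [K_pos ->]].
  apply Rmult_lt_0_compat; [apply Rmult_lt_0_compat|]; lra.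
Qed.

Lemma dA_closed_neg (Rr h : R) : 1 < Rr -> 0 < h ->
  forall x, 0 < x -> crit_sq Rr h < x ^ 2 -> dA_closed Rr h x < 0.
Proof.
  intros hR hh x hx hgt; destruct (dA_closed_factor Rr h x hR hh) as [K [K_pos ->]].
  assert (0 < K * x) by (apply Rmult_lt_0_compat; lra); nra.
Qed.

(* [Rr * (Rr + 1)^2 + 4 Rr h^2 - (Rr + h^2)^2 = Rr * (Rr + 1)^2 - (h^2 - Rr)^2],
   whose only sign change in [h^2 > 0] is at [h^2 = Rr + (Rr + 1) sqrt Rr]. *)
Lemma crit_sq_pos_iff (Rr h : R) : 1 < Rr -> 0 < h ->
  0 < crit_sq Rr h <-> h < sqrt (Rr + (Rr + 1) * sqrt Rr).
Proof.
  intros hR hh; unfold crit_sq.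
  set (t := sqrt Rr); set (a := Rr + (Rr + 1) * t).
  set (S := sqrt (Rr * ((Rr + 1) ^ 2 + 4 * h ^ 2))).
  assert (t_sq : t * t = Rr) by (apply sqrt_sqrt; lra).
  assert (t_ge0 : 0 <= t) by apply sqrt_pos.
  assert (t_gt1 : 1 < t) by nra.
  assert (a_sq : sqrt a * sqrt a = a) by (apply sqrt_sqrt; unfold a; nra).
  assert (S_sq : S * S = Rr * ((Rr + 1) ^ 2 + 4 * h ^ 2)).
  { apply sqrt_sqrt; pose proof (pow2_ge_0 (Rr + 1)); pose proof (pow2_ge_0 h); nra. }
  pose proof (sqrt_pos a); assert (0 <= S) by apply sqrt_pos.
  assert (gap : S * S - (Rr + h ^ 2) ^ 2 = (a - h ^ 2) * ((Rr + 1) * t + h ^ 2 - Rr)).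
  { rewrite S_sq; unfold a.
    transitivity ((Rr + 1) ^ 2 * (t * t) - (h ^ 2 - Rr) ^ 2); [rewrite t_sq | ]; ring. }
  assert (0 < (Rr + 1) * t + h ^ 2 - Rr) by (pose proof (pow2_ge_0 h); nra).
  split; intros Hs; assert (h ^ 2 < a) by nra; nra.
Qed.

Theorem mainTheorem8 (Rr h : R) (hR : 1 < Rr) (hh : 0 < h) :
  (h < sqrt (Rr + (Rr + 1) * sqrt Rr) ->
     forall x : R, is_maximizer (A_Omega Rr h) x <->
       (x = sqrt (sqrt (Rr * ((Rr + 1) ^ 2 + 4 * h ^ 2)) - (Rr + h ^ 2)) \/
        x = - sqrt (sqrt (Rr * ((Rr + 1) ^ 2 + 4 * h ^ 2)) - (Rr + h ^ 2))))
  /\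
  (sqrt (Rr + (Rr + 1) * sqrt Rr) <= h ->
     forall x : R, is_maximizer (A_Omega Rr h) x <-> x = 0).
Proof.
  assert (A_eq : A_Omega Rr h = A_closed Rr h).
  { apply functional_extensionality; intro x; apply A_Omega_closed; assumption. }
  rewrite A_eq.
  pose proof (A_closed_even Rr h hh) as even.
  pose proof (derivable_pt_lim_A_closed Rr h hh) as deriv.
  pose proof (dA_closed_pos Rr h hR hh) as pos.
  pose proof (dA_closed_neg Rr h hR hh) as neg.
  pose proof (crit_sq_pos_iff Rr h hR hh) as crit.
  split; intros h_cmp.
  - apply (is_maximizer_sqrt_iff _ (dA_closed Rr h) (crit_sq Rr h)); auto.
    apply crit, h_cmp.
  - apply (is_maximizer_0_iff _ (dA_closed Rr h) (crit_sq Rr h)); auto.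
    apply Rnot_lt_le; intros s_pos; apply crit in s_pos; lra.
Qed.
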